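(* Let $q$ be a prime number, $l\ge 2$ an integer, and $\alpha=\alpha_1/\alpha_2\in\mathbb{Q}\text{-}\mathcal{KS}(q^{l})$. Then $\alpha\in[-1,0[$ if and only if there exists a positive integer $d$ with $d\mid(q^{l}-q)$ such that $$\alpha=q-\frac{d}{\alpha_2}\quad\text{and}\quad \alpha_2\in\Bigl\{\Bigl\lceil\frac{d}{q+1}\Bigr\rceil,\dots,\Bigl\lceil\frac{d}{q}\Bigr\rceil-1\Bigr\}.$$
   Context: Every nonzero rational $\alpha$ is written $\alpha=\alpha_1/\alpha_2$ with $\alpha_1\in\mathbb{Z}$, $\alpha_2$ a positive integer and $\gcd(\alpha_1,\alpha_2)=1$. For an integer $N\ge 2$ and a nonzero rational $\alpha=\alpha_1/\alpha_2$, $N$ is called an $\alpha$-Korselt number if $N\neq\alpha$ and $\alpha_2p-\alpha_1$ divides $\alpha_2N-\alpha_1$ (in $\mathbb{Z}$) for every prime divisor $p$ of $N$. $\mathbb{Q}\text{-}\mathcal{KS}(N)$ is the set of all $\beta\in\mathbb{Q}\setminus\{0,N\}$ such that $N$ is a $\beta$-Korselt number. $[-1,0[=\{x:-1\le x<0\}$; $\lceil\cdot\rceil$ is the ceiling function; $\{a,\dots,b\}$ is the set of integers from $a$ to $b$ (empty if $a>b$). *)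

(* Rationals: alpha : rat, alpha_1 = numq alpha, alpha_2 = denq alpha (> 0, coprime). *)
From mathcomp Require Import all_boot all_order all_algebra.
Set Implicit Arguments. Unset Strict Implicit. Unset Printing Implicit Defensive.
Import Order.TTheory GRing.Theory Num.Theory.
Local Open Scope ring_scope.

Definition korselt (N : nat) (alpha : rat) : Prop :=
  (N%:Q != alpha) /\
  forall p : nat, prime p -> (p %| N)%N ->
    (denq alpha * p%:Z - numq alpha %| denq alpha * N%:Z - numq alpha)%Z.

Definition QKS (N : nat) (beta : rat) : Prop :=
  beta != 0 /\ beta != N%:Q /\ korselt N beta.

From mathcomp Require Import all_boot all_order all_algebra.
From mathcomp Require Import zify ring lra.
Import Order.TTheory GRing.Theory Num.Theory.
Local Open Scope ring_scope.

(* Put D := alpha_2 q - alpha_1.  Since q | q^l, D divides alpha_2 q^l - alpha_1,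
   hence alpha_2 (q^l - q); as gcd(D, alpha_2) = gcd(alpha_1, alpha_2) = 1,
   D | q^l - q.  Now alpha = q - D/alpha_2, and for d > 0 the condition
   -1 <= q - d/alpha_2 < 0 reads d/(q+1) <= alpha_2 < d/q, which for the
   integer alpha_2 is exactly the stated ceiling window. *)

Lemma coprimez_denqMsubnumq (alpha : rat) (m : int) :
  coprimez (denq alpha * m - numq alpha) (denq alpha).
Proof.
rewrite coprimez_sym /coprimez mulrC gcdzMDl gcdzN gcdzC.
exact: coprime_num_den.
Qed.

Lemma korselt_dvd_subn (N p : nat) (alpha : rat) :
  (0 < N)%N -> prime p -> (p %| N)%N -> korselt N alpha ->
  (`|(denq alpha * p%:Z - numq alpha)%R| %| N - p)%N.
Proof.
move=> N_gt0 p_pr pN [_ korseltN].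
set D := denq alpha * p%:Z - numq alpha.
have D_dvd_den_gap : (D %| denq alpha * (N%:Z - p%:Z))%Z.
  have -> : denq alpha * (N%:Z - p%:Z) = (denq alpha * N%:Z - numq alpha) - D.
    by rewrite /D; ring.
  exact: rpredB (korseltN p p_pr pN) (dvdzz D).
rewrite Gauss_dvdzr ?coprimez_denqMsubnumq // in D_dvd_den_gap.
by rewrite (subzn (dvdn_leq N_gt0 pN)) dvdzE in D_dvd_den_gap.
Qed.

Lemma denqMsubnumqE (alpha : rat) (x : int) :
  (denq alpha * x - numq alpha)%:~R = (denq alpha)%:~R * (x%:~R - alpha) :> rat.
Proof.
have den_neq0 : (denq alpha)%:~R != 0 :> rat by rewrite intr_eq0 denq_neq0.
by rewrite rmorphB rmorphM /= -{4}(divq_num_den alpha); field.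
Qed.

Lemma ceil_window {R : archiRealFieldType} {q : R} (d : R) {a : int} :
  0 < q -> 0 < a ->
  (-1 <= q - d / a%:~R /\ q - d / a%:~R < 0) <->
  (Num.ceil (d / (q + 1)) <= a /\ a <= Num.ceil (d / q) - 1).
Proof.
move=> q_gt0 a_gt0; have aR_gt0 : 0 < a%:~R :> R by rewrite ltr0z.
rewrite ceil_le_int ler_pdivrMr ?addr_gt0 // -ltzD1 subrK ceil_gt_int.
rewrite ltr_pdivlMr // -ler_pdivrMl // -ltr_pdivlMl // mulrC.
by split=> -[? ?]; split; lra.
Qed.

Theorem proposition5p7 (q l : nat) (alpha : rat) :
  prime q -> (2 <= l)%N -> QKS (q ^ l) alpha ->
  ((-1 <= alpha /\ alpha < 0) <->
   exists d : nat, [/\ (0 < d)%N, (d %| q ^ l - q)%N,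
     alpha = q%:Q - d%:Q / (denq alpha)%:~R,
     Num.ceil (d%:Q / (q.+1)%:Q) <= denq alpha
     & denq alpha <= Num.ceil (d%:Q / q%:Q) - 1]).
Proof.
move=> q_pr l_ge2 [_ [_ korseltN]].
have q_gt0 := prime_gt0 q_pr; have qQ_gt0 : 0 < q%:Q by rewrite ltr0n.
have den_gt0 := denq_gt0 alpha.
have -> : (q.+1)%:Q = q%:Q + 1 by rewrite -addn1 PoszD rmorphD.
split=> [window | [d [_ _ alphaE ceil_lo ceil_hi]]]; last first.
  by rewrite alphaE; apply/(ceil_window _ qQ_gt0 den_gt0).
set D := denq alpha * q%:Z - numq alpha.
have D_gt0 : 0 < D by have := numq_lt0 alpha; rewrite /D window.2; nia.
have dE : (`|D|%N)%:Q = (denq alpha)%:~R * (q%:Q - alpha).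
  by rewrite abszE gtr0_norm // denqMsubnumqE.
have alphaE : alpha = q%:Q - (`|D|%N)%:Q / (denq alpha)%:~R.
  by rewrite dE; field; rewrite intr_eq0 denq_neq0.
move: window; rewrite [in X in X -> _]alphaE.
move=> /(ceil_window _ qQ_gt0 den_gt0) [ceil_lo ceil_hi].
exists `|D|%N; split=> //; first lia.
apply: korselt_dvd_subn korseltN => //; first by rewrite expn_gt0 q_gt0.
exact: dvdn_exp (ltnW l_ge2) (dvdnn q).
Qed.
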